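(* Let $T=((\Omega,\mathcal{A}),\{(\Omega,\mathcal{M}_i)\}_{i\in N},\{t_i\}_{i\in N})$ be a type space. The players' beliefs in $T$ are consistent if and only if there exists a common certainty component $S\subseteq\Omega$ such that the players' beliefs in the induced type space $T_S$ over $S$ are consistent.
   Context: A field on a set $X$ is a collection of subsets of $X$ containing $X$ and closed under complements and finite intersections. For a field $\mathcal{A}$ on $\Omega$, $\mathrm{pba}(\Omega,\mathcal{A})$ is the set of finitely additive nonnegative $P:\mathcal{A}\to\mathbb{R}$ with $P(\Omega)=1$; $B(\Omega,\mathcal{A})$ the sup-norm closure of the linear span of indicators of sets in $\mathcal{A}$; the space of bounded finitely additive set functions carries the weak* topology (weakest making $\mu\mapsto\int f\,d\mu$ continuous for all $f\in B(\Omega,\mathcal{A})$), $\overline{\,\cdot\,}^\ast$ denotes weak* closure. A type space is $((\Omega,\mathcal{A}),\{(\Omega,\mathcal{M}_i)\}_{i\in N},\{t_i\}_{i\in N})$ with $N$ a nonempty set of players, fields $\mathcal{M}_i\subseteq\mathcal{A}$ on a set $\Omega$, and $t_i:\Omega\times\mathcal{A}\to[0,1]$ with: $t_i(\omega,\cdot)\in\mathrm{pba}(\Omega,\mathcal{A})$; $t_i(\cdot,E)\in B(\Omega,\mathcal{M}_i)$ for all $E\in\mathcal{A}$; $t_i(\omega,E)=1$ whenever $E\in\mathcal{M}_i$, $\omega\in E$. For each player $i$, $\Pi_i=\overline{\mathrm{conv}\{t_i(\omega,\cdot):\omega\in\Omega\}}^\ast$ (equivalently the $P\in\mathrm{pba}(\Omega,\mathcal{A})$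 with $P(E\cap F)=\int_F t_i(\cdot,E)\,dP$ for all $E\in\mathcal{A},F\in\mathcal{M}_i$). The players' beliefs in a type space are consistent if $\bigcap_{i\in I}\Pi_i\ne\emptyset$ for every finite set $I$ of players. A nonempty $S\subseteq\Omega$ is a common certainty component if there is $E\in\mathcal{A}$ with $E\subseteq S$ and $t_i(\omega,E)=1$ for all $\omega\in S$ and all $i\in N$. The induced type space is $T_S=((S,\mathcal{A}^S),\{(S,\mathcal{M}_i^S)\}_{i\in N},\{t_i^S\}_{i\in N})$ with $\mathcal{A}^S=\{F\cap S:F\in\mathcal{A}\}$, $\mathcal{M}_i^S=\{F\cap S:F\in\mathcal{M}_i\}$, $t_i^S(\omega,F\cap S)=t_i(\omega,F)$ for $\omega\in S$, $F\in\mathcal{A}$ (this is a type space). *)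

From HB Require Import structures.
From mathcomp Require Import all_boot all_order all_algebra.
From mathcomp Require Import boolp classical_sets cardinality reals.
Import Order.TTheory GRing.Theory Num.Theory.
Local Open Scope classical_set_scope.
Local Open Scope ring_scope.

Section TypeSpaces.
Context {R : realType}.

Definition is_field {X : Type} (F : set (set X)) : Prop :=
  F setT /\ (forall E, F E -> F (~` E)) /\
  (forall E G, F E -> F G -> F (E `&` G)).

Definition ind {X : Type} (E : set X) (x : X) : R := if `[< E x >] then 1 else 0.

Definition simple_fn {X : Type} {n : nat} (c : 'I_n -> R) (B : 'I_n -> set X) (x : X) : R :=
  \sum_(k < n) c k * ind (B k) x.

Definition B_space {X : Type} (F : set (set X)) (f : X -> R) : Prop :=
  forall eps : R, 0 < eps -> exists n (c : 'I_n -> R) (B : 'I_n -> set X),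
    (forall k, F (B k)) /\ (forall x, `|f x - simple_fn c B x| <= eps).

Definition fin_additive {X : Type} (A : set (set X)) (mu : set X -> R) : Prop :=
  forall E G, A E -> A G -> E `&` G = set0 -> mu (E `|` G) = mu E + mu G.

Definition ba_fun {X : Type} (A : set (set X)) (mu : set X -> R) : Prop :=
  fin_additive A mu /\ exists c : R, forall E, A E -> `|mu E| <= c.

Definition pba {X : Type} (A : set (set X)) (P : set X -> R) : Prop :=
  fin_additive A P /\ (forall E, A E -> 0 <= P E) /\ P setT = 1.

Definition is_ba_integral {X : Type} (A : set (set X)) (mu : set X -> R)
    (f : X -> R) (r : R) : Prop :=
  forall eps : R, 0 < eps -> exists2 delta : R, 0 < delta &
    forall n (c : 'I_n -> R) (B : 'I_n -> set X), (forall k, A (B k)) ->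
      (forall x, `|f x - simple_fn c B x| <= delta) ->
      `|\sum_(k < n) c k * mu (B k) - r| <= eps.

Definition ba_integral {X : Type} (A : set (set X)) (mu : set X -> R)
    (f : X -> R) : R :=
  xget 0 [set r | is_ba_integral A mu f r].

Definition conv_hull {X : Type} (C : set (set X -> R)) : set (set X -> R) :=
  [set Q | exists n (lam : 'I_n.+1 -> R) (P : 'I_n.+1 -> set X -> R),
     (forall k, 0 <= lam k) /\ \sum_(k < n.+1) lam k = 1 /\
     (forall k, C (P k)) /\ Q = (fun E => \sum_(k < n.+1) lam k * P k E)].

(* weak* closure (w.r.t. B(X,A)) in the space of bounded finitely additive
   set functions on A; written out through basic weak* neighbourhoods *)
Definition weak_star_closure {X : Type} (A : set (set X))
    (C : set (set X -> R)) : set (set X -> R) :=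
  [set mu | ba_fun A mu /\
     forall n (f : 'I_n -> X -> R), (forall k, B_space A (f k)) ->
     forall eps : R, 0 < eps ->
       exists2 nu, C nu &
         forall k, `|ba_integral A mu (f k) - ba_integral A nu (f k)| < eps].

Definition type_space {Om N : Type} (A : set (set Om)) (M : N -> set (set Om))
    (t : N -> Om -> set Om -> R) : Prop :=
  inhabited N /\ is_field A /\
  (forall i, is_field (M i) /\ M i `<=` A) /\
  (forall i w E, A E -> 0 <= t i w E <= 1) /\
  (forall i w, pba A (t i w)) /\
  (forall i E, A E -> B_space (M i) (fun w => t i w E)) /\
  (forall i E w, M i E -> E w -> t i w E = 1).

Definition Pi {Om N : Type} (A : set (set Om)) (t : N -> Om -> set Om -> R)
    (i : N) : set (set Om -> R) :=
  weak_star_closure A (conv_hull (range (t i))).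

Definition consistent {Om N : Type} (A : set (set Om)) (M : N -> set (set Om))
    (t : N -> Om -> set Om -> R) : Prop :=
  forall I : set N, finite_set I -> exists P, forall i, I i -> Pi A t i P.

Definition common_certainty_component {Om N : Type} (A : set (set Om))
    (t : N -> Om -> set Om -> R) (S : set Om) : Prop :=
  S !=set0 /\ exists E, A E /\ E `<=` S /\ (forall i w, S w -> t i w E = 1).

(* trace field {F cap S : F in F0} on the carrier S *)
Definition trace {Om : Type} (S : set Om) (F0 : set (set Om))
    : set (set {x : Om | S x}) :=
  [set G | exists2 H, F0 H & G = (@proj1_sig Om S) @^-1` H].

(* t_i^S(w, F cap S) = t_i(w, F) *)
Definition induced_t {Om N : Type} (S : set Om) (A : set (set Om))
    (t : N -> Om -> set Om -> R) : N -> {x : Om | S x} -> set {x : Om | S x} -> R :=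
  fun i w G => t i (proj1_sig w)
                 (xget set0 [set H | A H /\ G = (@proj1_sig Om S) @^-1` H]).

End TypeSpaces.

From mathcomp Require Import all_boot all_order all_algebra.
From mathcomp Require Import boolp classical_sets cardinality reals.
From mathcomp Require Import ring lra.
Import Order.TTheory GRing.Theory Num.Theory.
Local Open Scope classical_set_scope.
Local Open Scope ring_scope.

(* If beliefs are consistent, Ω itself is a common certainty component, and T_Ω is T read
   through the bijection ω ↦ (ω, I): common priors are transported along it.
   Conversely, let E ⊆ S witness a common certainty component and let P' be a common prior
   of T_S. The types t_i(ω, ·) with ω ∈ S give E probability one, hence so do their convex
   combinations, and testing P' against the indicator of (F \ E) ∩ S shows that P'
   vanishes off E as well. A finitely additive measure carried by E ⊆ S sees an integrand only
   through its restriction to S, so integrals in T and in T_S agree, and F ↦ P'(F ∩ S) is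
   a common prior of T. *)

Section Fields.
Context {X : Type} {F : set (set X)}.
Hypothesis hF : is_field F.

Lemma field_setT : F setT.
Proof. by case: hF. Qed.

Lemma field_setC {E} : F E -> F (~` E).
Proof. by case: hF => _ [FC _]; apply: FC. Qed.

Lemma field_setI {E G} : F E -> F G -> F (E `&` G).
Proof. by case: hF => _ [_ FI]; apply: FI. Qed.

Lemma field_set0 : F set0.
Proof. by rewrite -setCT; exact/field_setC/field_setT. Qed.

Lemma field_setU {E G} : F E -> F G -> F (E `|` G).
Proof.
by move=> FE FG; rewrite -[_ `|` _]setCK setCU; apply/field_setC/field_setI; apply: field_setC.
Qed.

Lemma field_setDI {E G} : F E -> F G -> F (E `&` ~` G).
Proof. by move=> FE FG; apply/field_setI/field_setC. Qed.

End Fields.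

Definition concentrated {R : realType} {X : Type} (F : set (set X))
    (mu : set X -> R) (E : set X) :=
  forall H, F H -> mu (H `&` ~` E) = 0.

Section FinitelyAdditive.
Context {R : realType} {X : Type} {F : set (set X)} {mu : set X -> R}.
Hypotheses (hF : is_field F) (mu_add : fin_additive F mu).

Lemma fin_additive_set0 : mu set0 = 0.
Proof.
have := mu_add set0 set0 (field_set0 hF) (field_set0 hF) (setI0 _).
by rewrite setU0 => h; lra.
Qed.

Lemma fin_additive_setIC {E D} : F E -> F D -> mu E = mu (E `&` D) + mu (E `&` ~` D).
Proof.
move=> FE FD; rewrite -mu_add.
- by rewrite -setIUr setUv setIT.
- exact: field_setI.
- exact: field_setDI.
- by rewrite setIACA setICr setI0.
Qed.

Lemma concentrated_setI {E H} : F E -> concentrated F mu E -> F H -> mu H = mu (H `&` E).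
Proof. by move=> FE cE FH; rewrite (fin_additive_setIC FH FE) cE // addr0. Qed.

Lemma concentrated_setT : concentrated F mu setT.
Proof. by move=> H _; rewrite setCT setI0 fin_additive_set0. Qed.

End FinitelyAdditive.

Section ProbabilityCharges.
Context {R : realType} {X : Type} {F : set (set X)} {P : set X -> R}.
Hypotheses (hF : is_field F) (hP : pba F P).

Lemma pba_setC E : F E -> P (~` E) = 1 - P E.
Proof.
case: hP => P_add [_ PT] FE.
have := P_add _ _ FE (field_setC hF FE) (setICr E).
by rewrite setUv PT => ->; ring.
Qed.

Lemma pba_le1 E : F E -> P E <= 1.
Proof.
move=> FE; have := hP.2.1 _ (field_setC hF FE).
by rewrite pba_setC // subr_ge0.
Qed.

Lemma pba_ba : ba_fun F P.
Proof.
split; first exact: hP.1.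
by exists 1 => E FE; rewrite ger0_norm ?pba_le1 //; exact: hP.2.1.
Qed.

Lemma pba_concentrated {E} : F E -> P E = 1 -> concentrated F P E.
Proof.
case: hP => P_add [P_ge0 _] FE PE H FH.
have := fin_additive_setIC hF P_add (field_setC hF FE) FH.
rewrite pba_setC // PE subrr setIC.
have := P_ge0 _ (field_setI hF (field_setC hF FE) (field_setC hF FH)).
have := P_ge0 _ (field_setDI hF FH FE).
lra.
Qed.

End ProbabilityCharges.

Section ConvexHull.
Context {R : realType}.

Lemma conv_hull_nonempty {X : Type} {C : set (set X -> R)} {nu} :
  conv_hull C nu -> C !=set0.
Proof. by case=> n [_ [P [_ [_ [CP _]]]]]; exists (P ord0). Qed.

Lemma conv_hull_const {X : Type} (C : set (set X -> R)) nu G a :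
  (forall Q, C Q -> Q G = a) -> conv_hull C nu -> nu G = a.
Proof.
move=> CG [n [lam [Q [_ [lam1 [CQ ->]]]]]].
rewrite (eq_bigr (fun k => lam k * a)) => [|k _]; last by rewrite CG.
by rewrite -mulr_suml lam1 mul1r.
Qed.

Lemma conv_hull_pba {X : Type} (F : set (set X)) (C : set (set X -> R)) nu :
  (forall Q, C Q -> pba F Q) -> conv_hull C nu -> pba F nu.
Proof.
move=> CF [n [lam [Q [lam_ge0 [lam1 [CQ ->]]]]]]; split; [|split].
- move=> E G FE FG EG; rewrite -big_split; apply: eq_bigr => k _.
  by rewrite (CF _ (CQ k)).1 // mulrDr.
- move=> E FE; apply: sumr_ge0 => k _; apply: mulr_ge0 => //.
  exact: (CF _ (CQ k)).2.1.
- rewrite (eq_bigr (fun k => lam k)) // => k _.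
  by rewrite (CF _ (CQ k)).2.2 mulr1.
Qed.

Lemma conv_hull_range_pba {X Y : Type} {F : set (set X)} {q : Y -> set X -> R} {nu} :
  (forall y, pba F (q y)) -> conv_hull (range q) nu -> pba F nu.
Proof. by move=> q_pba; apply: conv_hull_pba => _ [y _ <-]. Qed.

Lemma conv_hull_transport {U V : Type} {C : set (set U -> R)}
    {C' : set (set V -> R)} {D : set (set V)} {g : set V -> set U} {nu} :
  (forall Q, C Q -> exists2 Q', C' Q' & forall G, D G -> Q' G = Q (g G)) ->
  conv_hull C nu -> exists2 nu', conv_hull C' nu' & forall G, D G -> nu' G = nu (g G).
Proof.
move=> CC' [n [lam [Q [lam_ge0 [lam1 [CQ ->]]]]]].
have /choice[Q' hQ'] : forall k, exists Q', C' Q' /\ forall G, D G -> Q' G = Q k (g G).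
  by move=> k; have [Q' ? ?] := CC' _ (CQ k); exists Q'.
exists (fun G => \sum_(k < n.+1) lam k * Q' k G).
  by exists n, lam, Q'; split; [|split; [|split]] => // k; exact: (hQ' k).1.
by move=> G DG; apply: eq_bigr => k _; rewrite (hQ' k).2.
Qed.

End ConvexHull.

Section Indicators.
Context {R : realType} {X : Type}.

Lemma ind_in {E : set X} {x} : E x -> ind E x = 1 :> R.
Proof. by move=> Ex; rewrite /ind asboolT. Qed.

Lemma ind_notin {E : set X} {x} : ~ E x -> ind E x = 0 :> R.
Proof. by move=> Ex; rewrite /ind asboolF. Qed.

Lemma ind_setI (E G : set X) x : ind (E `&` G) x = ind E x * ind G x :> R.
Proof.
have [Ex|Ex] := pselect (E x); last by rewrite (ind_notin Ex) mul0r ind_notin // => -[].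
have [Gx|Gx] := pselect (G x); last by rewrite (ind_notin Gx) mulr0 ind_notin // => -[].
by rewrite (ind_in Ex) (ind_in Gx) mulr1 ind_in.
Qed.

Lemma simple_fn_setI n (c : 'I_n -> R) (B : 'I_n -> set X) E x :
  simple_fn c (fun k => B k `&` E) x = ind E x * simple_fn c B x.
Proof.
by rewrite /simple_fn mulr_sumr; apply: eq_bigr => k _; rewrite ind_setI; ring.
Qed.

Lemma B_space_ind {F : set (set X)} {G} : F G -> B_space F (@ind R X G).
Proof.
move=> FG eps eps_gt0; exists 1%N, (fun _ => 1), (fun _ => G); split => // x.
by rewrite /simple_fn big_ord1 mul1r subrr normr0 ltW.
Qed.

End Indicators.

Lemma ba_integral_eq {R : realType} {X : Type} (F : set (set X)) (mu : set X -> R) f r :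
  B_space F f -> is_ba_integral F mu f r -> ba_integral F mu f = r.
Proof.
move=> Bf fr; apply: xget_unique => // r' fr'.
apply/eqP; rewrite -subr_eq0 -normr_le0; apply/ler_addgt0Pr => e e_gt0.
have e2_gt0 : 0 < e / 2 by rewrite divr_gt0.
have [d1 d1_gt0 h1] := fr' _ e2_gt0; have [d2 d2_gt0 h2] := fr _ e2_gt0.
have d_gt0 : 0 < Num.min d1 d2 by rewrite lt_min d1_gt0.
have [n [c [B [FB fB]]]] := Bf _ d_gt0.
have g1 : `|\sum_(k < n) c k * mu (B k) - r'| <= e / 2.
  by apply: h1 FB _ => x; apply: le_trans (fB x) _; rewrite ge_min lexx.
have g2 : `|\sum_(k < n) c k * mu (B k) - r| <= e / 2.
  by apply: h2 FB _ => x; apply: le_trans (fB x) _; rewrite ge_min lexx orbT.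
have := ler_normB (\sum_(k < n) c k * mu (B k) - r') (\sum_(k < n) c k * mu (B k) - r).
have -> : \sum_(k < n) c k * mu (B k) - r' - (\sum_(k < n) c k * mu (B k) - r)
  = - (r' - r) by ring.
rewrite normrN; lra.
Qed.

Section IndicatorIntegral.
Context {R : realType} {X : Type} {F : set (set X)} {mu : set X -> R}.
Hypotheses (hF : is_field F) (mu_add : fin_additive F mu).

Lemma const_variation a d D : F D -> (forall x, D x -> `|a| <= d) ->
  exists Dp Dm, [/\ F Dp, F Dm, Dp `<=` D, Dm `<=` D &
    `|a * mu D| <= d * (mu Dp - mu Dm)].
Proof.
move=> FD ad; have F0 := field_set0 hF; have mu0 := fin_additive_set0 hF mu_add.
have [->|/set0P[x Dx]] := eqVneq D set0.
  by exists set0, set0; rewrite mu0 subrr !mulr0 normr0; split.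
have [mu_ge0|mu_lt0] := leP 0 (mu D).
  exists D, set0; rewrite mu0 subr0 normrM (ger0_norm mu_ge0).
  by split => //; apply: (ler_wpM2r mu_ge0); exact: ad x Dx.
exists set0, D; rewrite mu0 sub0r normrM (ltr0_norm mu_lt0).
by split => //; apply: ler_wpM2r (ad x Dx); rewrite oppr_ge0 ltW.
Qed.

Lemma weighted_sum_setIC n (c : 'I_n -> R) B D G : (forall k, F (B k)) -> F D -> F G ->
  \sum_(k < n) c k * mu (B k `&` D) =
  \sum_(k < n) c k * mu (B k `&` (D `&` G)) + \sum_(k < n) c k * mu (B k `&` (D `&` ~` G)).
Proof.
move=> FB FD FG; rewrite -big_split; apply: eq_bigr => k _.
by rewrite /= -mulrDr (fin_additive_setIC hF mu_add (field_setI hF (FB k) FD) FG) !setIA.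
Qed.

(* Dp and Dm are the unions of the cells of the partition of D generated by the B k on
   which mu is nonnegative, resp. negative. *)
Lemma simple_sum_variation {n} {c : 'I_n -> R} {B a d D} :
  (forall k, F (B k)) -> F D ->
  (forall x, D x -> `|a + \sum_(k < n) c k * ind (B k) x| <= d) ->
  exists Dp Dm, [/\ F Dp, F Dm, Dp `<=` D, Dm `<=` D &
    `|a * mu D + \sum_(k < n) c k * mu (B k `&` D)| <= d * (mu Dp - mu Dm)].
Proof.
elim: n c B a D => [|n IH] c B a D FB FD hD.
  rewrite big_ord0 addr0; apply: const_variation => // x /hD.
  by rewrite big_ord0 addr0.
set b := B ord_max; have Fb : F b := FB ord_max.
pose c' k := c (widen_ord (leqnSn n) k); pose B' k := B (widen_ord (leqnSn n) k).
have FB' k : F (B' k) := FB _.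
have [|Dp1 [Dm1 [Fp1 Fm1 sp1 sm1 h1]]] :=
  IH c' B' (a + c ord_max) (D `&` b) FB' (field_setI hF FD Fb).
  move=> x [Dx bx]; have := hD x Dx.
  by rewrite big_ord_recr /= (ind_in bx) mulr1 addrAC addrA.
have [|Dp2 [Dm2 [Fp2 Fm2 sp2 sm2 h2]]] :=
  IH c' B' a (D `&` ~` b) FB' (field_setDI hF FD Fb).
  by move=> x [Dx bx]; have := hD x Dx; rewrite big_ord_recr /= (ind_notin bx) mulr0 addr0.
have disj U V : U `<=` D `&` b -> V `<=` D `&` ~` b -> U `&` V = set0.
  by move=> sU sV; apply/seteqP; split => // x [/sU[_ ?] /sV[_]].
exists (Dp1 `|` Dp2), (Dm1 `|` Dm2); split.
- exact: field_setU.
- exact: field_setU.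
- by move=> x [/sp1[]|/sp2[]].
- by move=> x [/sm1[]|/sm2[]].
rewrite (mu_add _ _ Fp1 Fp2 (disj _ _ sp1 sp2)) (mu_add _ _ Fm1 Fm2 (disj _ _ sm1 sm2)).
rewrite big_ord_recr /= (weighted_sum_setIC _ c' _ _ _ FB' FD Fb).
rewrite (fin_additive_setIC hF mu_add FD Fb) (setIC (B ord_max)) -/b.
set s1 := \sum_(k < n) _; set s2 := \sum_(k < n) _.
have -> : a * (mu (D `&` b) + mu (D `&` ~` b)) + (s1 + s2 + c ord_max * mu (D `&` b))
  = ((a + c ord_max) * mu (D `&` b) + s1) + (a * mu (D `&` ~` b) + s2) by ring.
have -> : d * (mu Dp1 + mu Dp2 - (mu Dm1 + mu Dm2)) =
  d * (mu Dp1 - mu Dm1) + d * (mu Dp2 - mu Dm2) by ring.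
exact: le_trans (ler_normD _ _) (lerD h1 h2).
Qed.

Lemma simple_sum_bound {c0 n} {c : 'I_n -> R} {B a d D} :
  (forall E, F E -> `|mu E| <= c0) -> (forall k, F (B k)) -> F D -> 0 <= d ->
  (forall x, D x -> `|a + \sum_(k < n) c k * ind (B k) x| <= d) ->
  `|a * mu D + \sum_(k < n) c k * mu (B k `&` D)| <= d * (c0 + c0).
Proof.
move=> mu_bd FB FD d_ge0 hD.
have [Dp [Dm [Fp Fm _ _ /le_trans->//]]] := simple_sum_variation FB FD hD.
rewrite ler_wpM2l //; have := mu_bd _ Fp; have := mu_bd _ Fm.
have := ler_norm (mu Dp); have := ler_norm (- mu Dm); rewrite normrN; lra.
Qed.

(* Splitting along G, a simple function within d of 1_G has integral within 4 c0 d of mu G. *)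
Lemma is_ba_integral_ind c0 G : (forall E, F E -> `|mu E| <= c0) -> F G ->
  is_ba_integral F mu (ind G) (mu G).
Proof.
move=> mu_bd FG eps eps_gt0.
have c0_ge0 : 0 <= c0 by apply: le_trans (mu_bd _ (field_setT hF)).
pose d := eps / (4 * c0 + 1).
have d_gt0 : 0 < d by rewrite divr_gt0 // ltr_wpDl // mulr_ge0.
exists d => // n c B FB hB.
have inG x : G x -> `|-1 + \sum_(k < n) c k * ind (B k) x| <= d.
  by move=> Gx; have := hB x; rewrite /simple_fn (ind_in Gx) -normrN opprB addrC.
have notinG x : (~` G) x -> `|0 + \sum_(k < n) c k * ind (B k) x| <= d.
  by move=> Gx; have := hB x; rewrite /simple_fn (ind_notin Gx) -normrN opprB add0r subr0.
have bd_in := simple_sum_bound mu_bd FB FG (ltW d_gt0) inG.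
have bd_out := simple_sum_bound mu_bd FB (field_setC hF FG) (ltW d_gt0) notinG.
have bd_eps : d * (c0 + c0) + d * (c0 + c0) <= eps.
  by rewrite -mulrDr /d mulrAC ler_pdivrMr ?ltr_wpDl ?mulr_ge0 //; lra.
have -> : \sum_(k < n) c k * mu (B k) - mu G =
    (-1 * mu G + \sum_(k < n) c k * mu (B k `&` G)) +
    (0 * mu (~` G) + \sum_(k < n) c k * mu (B k `&` ~` G)).
  under eq_bigr do rewrite (fin_additive_setIC hF mu_add (FB _) FG) mulrDr.
  rewrite big_split /=; ring.
apply: le_trans (ler_normD _ _) _; lra.
Qed.

End IndicatorIntegral.

Lemma ba_integral_ind {R : realType} {X : Type} (F : set (set X)) (mu : set X -> R) G :
  is_field F -> ba_fun F mu -> F G -> ba_integral F mu (ind G) = mu G.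
Proof.
move=> hF [mu_add [c0 mu_bd]] FG.
exact: ba_integral_eq (B_space_ind FG) (is_ba_integral_ind hF mu_add _ _ mu_bd FG).
Qed.

Definition pushforward {R : realType} {U V : Type} (h : U -> V) (mu : set U -> R) :
  set V -> R := fun G => mu (h @^-1` G).

Section Pushforward.
Context {R : realType} {U V : Type} {h : U -> V} {A : set (set U)} {B : set (set V)}.
Hypothesis h_meas : forall G, B G -> A (h @^-1` G).

Lemma ba_fun_pushforward {mu : set U -> R} : ba_fun A mu -> ba_fun B (pushforward h mu).
Proof.
move=> [mu_add [c mu_bd]]; split; last by exists c => G /h_meas/mu_bd.
move=> G1 G2 BG1 BG2 G12; rewrite /pushforward preimage_setU mu_add //.
- exact: h_meas.
- exact: h_meas.
- by rewrite -preimage_setI G12 preimage_set0.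
Qed.

Lemma B_space_comp {f : V -> R} : B_space B f -> B_space A (f \o h).
Proof.
move=> Bf eps eps_gt0; have [n [c [D [BD fD]]]] := Bf eps eps_gt0.
by exists n, c, (fun k => h @^-1` D k); split => [k|x]; [exact: h_meas | exact: fD].
Qed.

End Pushforward.

Section WeakStarClosure.
Context {R : realType}.

Lemma weak_star_closure_nonempty {X : Type} {A : set (set X)} {C : set (set X -> R)} {mu} :
  weak_star_closure A C mu -> C !=set0.
Proof.
case=> _ /(_ 0%N (fun _ _ => 0)) approx.
by have [|nu Cnu _] := approx _ 1 ltr01; [case | exists nu].
Qed.

Lemma weak_star_closure_eq {X : Type} (A : set (set X)) (C : set (set X -> R)) mu G a :
  is_field A -> A G -> (forall nu, C nu -> ba_fun A nu /\ nu G = a) ->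
  weak_star_closure A C mu -> mu G = a.
Proof.
move=> hA AG hC [mu_ba approx].
apply/eqP; rewrite -subr_eq0 -normr_le0; apply/ler_addgt0Pr => e e_gt0; rewrite add0r.
have [nu /hC[nu_ba <-] /(_ ord0)] :=
  approx 1%N (fun _ => ind G) (fun _ => B_space_ind AG) e e_gt0.
by rewrite !ba_integral_ind // => /ltW.
Qed.

Lemma weak_star_closure_transfer {U V : Type} {A : set (set U)} {B : set (set V)}
    {C : set (set U -> R)} {C' : set (set V -> R)} {mu mu'} {T : (V -> R) -> U -> R} :
  ba_fun B mu' -> (forall f, B_space B f -> B_space A (T f)) ->
  (forall f, B_space B f -> ba_integral B mu' f = ba_integral A mu (T f)) ->
  (forall nu, C nu -> exists2 nu', C' nu' &
     forall f, B_space B f -> ba_integral B nu' f = ba_integral A nu (T f)) ->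
  weak_star_closure A C mu -> weak_star_closure B C' mu'.
Proof.
move=> mu'_ba BT mu_mu' CC' [_ approx]; split => // n f Bf eps eps_gt0.
have [nu /CC'[nu' C'nu' nu_nu'] close] :=
  approx n (T \o f) (fun k => BT _ (Bf k)) eps eps_gt0.
by exists nu' => // k; rewrite (mu_mu' _ (Bf k)) (nu_nu' _ (Bf k)); exact: close.
Qed.

End WeakStarClosure.

Definition glue {T : Type} {n m : nat} (a : 'I_n -> T) (b : 'I_m -> T) (k : 'I_(n + m)) : T :=
  match split k with inl i => a i | inr j => b j end.

Section Glue.
Context {T : Type} {n m : nat} (a : 'I_n -> T) (b : 'I_m -> T).

Lemma glue_lshift i : glue a b (lshift m i) = a i.
Proof. by rewrite /glue -[lshift m i]/(unsplit (inl i)) unsplitK. Qed.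

Lemma glue_rshift j : glue a b (rshift n j) = b j.
Proof. by rewrite /glue -[rshift n j]/(unsplit (inr j)) unsplitK. Qed.

Lemma glue_ind (P : T -> Prop) :
  (forall i, P (a i)) -> (forall j, P (b j)) -> forall k, P (glue a b k).
Proof. by move=> Pa Pb k; rewrite /glue; case: split. Qed.

End Glue.

Lemma big_glue {R : realType} {T : Type} {n m : nat} (c : 'I_n -> R) (d : 'I_m -> R)
    (B : 'I_n -> T) (D : 'I_m -> T) (phi : T -> R) :
  \sum_(k < n + m) glue c d k * phi (glue B D k) =
  \sum_(i < n) c i * phi (B i) + \sum_(j < m) d j * phi (D j).
Proof.
rewrite big_split_ord; congr (_ + _); apply: eq_bigr => k _.
  by rewrite !glue_lshift.
by rewrite !glue_rshift.
Qed.

Lemma simple_fn_glue {R : realType} {X : Type} {n m : nat} (c : 'I_n -> R) (d : 'I_m -> R)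
    (B : 'I_n -> set X) (D : 'I_m -> set X) x :
  simple_fn (glue c d) (glue B D) x = simple_fn c B x + simple_fn d D x.
Proof. exact: (big_glue c d B D (ind^~ x)). Qed.

Section Trace.
Context {R : realType} {X : Type} (S : set X) {A : set (set X)}.
Hypothesis hA : is_field A.
Local Notation val := (@proj1_sig X S).

Lemma trace_preimage {H} : A H -> trace S A (val @^-1` H).
Proof. by exists H. Qed.

Lemma trace_field : is_field (trace S A).
Proof.
split; [|split].
- by exists setT; [exact: field_setT|].
- by move=> _ [H AH ->]; exists (~` H); [exact: field_setC|].
- by move=> _ _ [H AH ->] [G AG ->]; exists (H `&` G); [exact: field_setI|].
Qed.

Context {E : set X}.
Hypotheses (AE : A E) (ES : E `<=` S).

Lemma concentrated_preimage_eq {mu : set X -> R} {H1 H2} :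
  fin_additive A mu -> concentrated A mu E -> A H1 -> A H2 ->
  val @^-1` H1 = val @^-1` H2 -> mu H1 = mu H2.
Proof.
move=> mu_add cE AH1 AH2 H12.
rewrite (concentrated_setI hA mu_add AE cE AH1) (concentrated_setI hA mu_add AE cE AH2).
congr mu; apply/seteqP; split => x [Hx Ex]; split => //.
  by move: Hx; rewrite -[H1 x]/((val @^-1` H1) (exist _ x (ES _ Ex))) H12.
by move: Hx; rewrite -[H2 x]/((val @^-1` H2) (exist _ x (ES _ Ex))) -H12.
Qed.

Section Integrals.
Context {mu : set X -> R} {mu' : set {x | S x} -> R}.
Hypothesis mu_mu' : forall H, A H -> mu H = mu' (val @^-1` H).

(* An approximation on the trace is lifted on E and completed off E by an approximation of
   f on X, which mu does not see. *)
Lemma is_ba_integral_trace f r : fin_additive A mu -> concentrated A mu E ->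
  B_space A f -> is_ba_integral A mu f r -> is_ba_integral (trace S A) mu' (f \o val) r.
Proof.
move=> mu_add cE Bf fr eps eps_gt0.
have [delta delta_gt0 approx] := fr eps eps_gt0; exists delta => // n c B' AB' fB'.
have /choice[H hH] k : exists H, A H /\ B' k = val @^-1` H.
  by have [H AH ->] := AB' k; exists H.
have eB' : B' = (fun k => val @^-1` H k) by apply/funext => k; exact: (hH k).2.
subst B'; have [m [d [D [AD fD]]]] := Bf delta delta_gt0.
have := approx _ (glue c d) (glue (fun k => H k `&` E) (fun j => D j `&` ~` E)).
rewrite big_glue [X in _ + X - _]big1 ?addr0 => [|j _]; last by rewrite (cE _ (AD j)) mulr0.
have -> : \sum_(k < n) c k * mu (H k `&` E) = \sum_(k < n) c k * mu' (val @^-1` H k).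
  apply: eq_bigr => k _; have [AH _] := hH k.
  by rewrite -(concentrated_setI hA mu_add AE cE AH) mu_mu'.
apply.
  by apply: glue_ind => k; [exact: field_setI (hH k).1 AE | exact: field_setDI].
move=> x; rewrite simple_fn_glue !simple_fn_setI.
have [Ex|Ex] := pselect (E x).
  rewrite (ind_in Ex) (@ind_notin _ _ (~` E)) ?mul1r ?mul0r ?addr0; last by [].
  exact: (fB' (exist _ x (ES _ Ex))).
by rewrite (ind_notin Ex) (@ind_in _ _ (~` E)) // mul0r mul1r add0r.
Qed.

Lemma is_ba_integral_of_trace f r :
  is_ba_integral (trace S A) mu' (f \o val) r -> is_ba_integral A mu f r.
Proof.
move=> fr eps eps_gt0; have [delta delta_gt0 approx] := fr eps eps_gt0.
exists delta => // n c B AB fB.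
rewrite (eq_bigr (fun k => c k * mu' (val @^-1` B k))) => [|k _]; last by rewrite mu_mu'.
exact: approx n c _ (fun k => trace_preimage (AB k)) (fun w => fB (val w)).
Qed.

Lemma ba_integral_trace f : fin_additive A mu -> concentrated A mu E ->
  B_space A f -> ba_integral A mu f = ba_integral (trace S A) mu' (f \o val).
Proof.
move=> mu_add cE Bf; rewrite /ba_integral; congr xget.
apply/funext => r; apply/propext; split.
  exact: is_ba_integral_trace.
exact: is_ba_integral_of_trace.
Qed.

End Integrals.

Lemma pba_trace {P : set X -> R} {P' : set {x | S x} -> R} :
  pba A P -> concentrated A P E -> (forall H, A H -> P H = P' (val @^-1` H)) ->
  pba (trace S A) P'.
Proof.
move=> [P_add [P_ge0 PT]] cE PP'; split; [|split].
- move=> _ _ [H1 AH1 ->] [H2 AH2 ->] H12.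
  have AH12 := field_setU hA AH1 AH2.
  have [AH1E AH2E] := (field_setI hA AH1 AE, field_setI hA AH2 AE).
  rewrite -preimage_setU -!PP' // (concentrated_setI hA P_add AE cE AH12) setIUl P_add //.
    by rewrite -!(concentrated_setI hA P_add AE cE).
  apply/seteqP; split => // x [[H1x Ex] [H2x _]].
  by have := congr1 (fun Y => Y (exist _ x (ES _ Ex))) H12; rewrite /= => <-.
- by move=> _ [H AH ->]; rewrite -PP' //; exact: P_ge0.
- by rewrite -(preimage_setT val) -PP' //; exact: field_setT.
Qed.

End Trace.

Section InducedTypes.
Context {R : realType} {X N : Type} (S : set X) {A : set (set X)} {E : set X}.
Context (t : N -> X -> set X -> R) (i : N).
Hypotheses (hA : is_field A) (AE : A E) (ES : E `<=` S).
Hypotheses (t_pba : forall w, pba A (t i w)) (tE : forall w, S w -> t i w E = 1).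
Local Notation val := (@proj1_sig X S).

Let t_concentrated w (Sw : S w) : concentrated A (t i w) E :=
  pba_concentrated hA (t_pba w) AE (tE _ Sw).

Lemma induced_t_preimage w H : A H -> induced_t S A t i w (val @^-1` H) = t i (val w) H.
Proof.
move=> AH; rewrite /induced_t; set H' := xget _ _.
have [AH' HH'] : [set H0 | A H0 /\ val @^-1` H = val @^-1` H0] H'.
  by apply: xgetPex; exists H.
have [t_add _] := t_pba (val w).
exact: (concentrated_preimage_eq S hA AE ES t_add (t_concentrated _ (svalP w)) AH' AH
  (esym HH')).
Qed.

Lemma conv_induced_t_pba {nu'} :
  conv_hull (range (induced_t S A t i)) nu' -> pba (trace S A) nu'.
Proof.
apply: conv_hull_range_pba => w.
apply: (pba_trace S hA AE ES (t_pba (val w)) (t_concentrated _ (svalP w))) => H AH.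
by rewrite induced_t_preimage.
Qed.

Lemma conv_induced_t_null {nu' H} : conv_hull (range (induced_t S A t i)) nu' -> A H ->
  nu' (val @^-1` (H `&` ~` E)) = 0.
Proof.
move=> nu'C AH; apply: conv_hull_const nu'C => _ [w _ <-].
by rewrite induced_t_preimage ?(t_concentrated _ (svalP w)) //; exact: field_setDI.
Qed.

Lemma Pi_trace_pushforward P' :
  Pi (trace S A) (induced_t S A t) i P' -> Pi A t i (pushforward val P').
Proof.
move=> P'Pi; have val_meas H : A H -> trace S A (val @^-1` H) := trace_preimage S.
have P_ba := ba_fun_pushforward val_meas P'Pi.1.
have P_concentrated : concentrated A (pushforward val P') E.
  move=> H AH; apply: weak_star_closure_eq P'Pi.
  - exact: trace_field.
  - exact/val_meas/field_setDI.
  move=> nu' nu'C; split; first exact: pba_ba (trace_field S hA) (conv_induced_t_pba nu'C).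
  exact: conv_induced_t_null.
apply: (weak_star_closure_transfer (T := fun f => f \o val)) P'Pi => // [f|f Bf|nu' nu'C].
- exact: B_space_comp.
- exact: (ba_integral_trace S hA AE ES (fun _ _ => erefl) _ P_ba.1 P_concentrated Bf).
have [|nu nuC nu_nu'] :=
    conv_hull_transport (C' := range (t i)) (D := A) (g := preimage val) _ nu'C.
  move=> _ [w _ <-]; exists (t i (val w)) => [|H AH]; first by exists (val w).
  by rewrite induced_t_preimage.
exists nu => // f Bf; apply: (ba_integral_trace S hA AE ES nu_nu' _ _ _ Bf).
  exact: (conv_hull_range_pba t_pba nuC).1.
by move=> H AH; rewrite nu_nu' ?conv_induced_t_null //; exact: field_setDI.
Qed.

End InducedTypes.

Definition to_setT {X : Type} (x : X) : {x : X | setT x} := exist _ x I.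

Lemma to_setT_val {X : Type} (w : {x : X | setT x}) : to_setT (proj1_sig w) = w.
Proof. by case: w => x []. Qed.

Section FullTrace.
Context {R : realType} {X N : Type} {A : set (set X)} (t : N -> X -> set X -> R) (i : N).
Hypotheses (hA : is_field A) (t_pba : forall w, pba A (t i w)).
Local Notation val := (@proj1_sig X setT).

Let to_setT_meas G : trace setT A G -> A (to_setT @^-1` G).
Proof. by case=> H AH ->. Qed.

Let ba_integral_to_setT (mu : set X -> R) mu' g : fin_additive A mu ->
  (forall H, A H -> mu H = mu' (val @^-1` H)) -> B_space (trace setT A) g ->
  ba_integral (trace setT A) mu' g = ba_integral A mu (g \o to_setT).
Proof.
move=> mu_add mu_mu' Bg.
rewrite (ba_integral_trace setT hA (field_setT hA) (@subset_refl _ _) mu_mu' _ mu_add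
  (concentrated_setT hA mu_add) (B_space_comp to_setT_meas Bg)).
by congr ba_integral; apply/funext => w /=; rewrite to_setT_val.
Qed.

Lemma Pi_pushforward_to_setT P :
  Pi A t i P -> Pi (trace setT A) (induced_t setT A t) i (pushforward to_setT P).
Proof.
move=> PPi; have [[P_add _] _] := PPi.
apply: (weak_star_closure_transfer (T := fun g => g \o to_setT)) (PPi) => [|g|g Bg|nu nuC].
- exact: (ba_fun_pushforward to_setT_meas PPi.1).
- exact: B_space_comp.
- exact: ba_integral_to_setT P_add (fun _ _ => erefl) Bg.
have [|nu' nu'C nu'_nu] := conv_hull_transport
  (C' := range (induced_t setT A t i)) (D := trace setT A) (g := preimage to_setT) _ nuC.
  move=> _ [w _ <-]; exists (induced_t setT A t i (to_setT w)); first by exists (to_setT w).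
  move=> _ [H AH ->].
  by rewrite (induced_t_preimage _ t i hA (field_setT hA) (@subset_refl _ _) t_pba
    (fun w _ => (t_pba w).2.2)).
exists nu' => // g Bg; apply: ba_integral_to_setT Bg.
  exact: (conv_hull_range_pba t_pba nuC).1.
by move=> H AH; rewrite nu'_nu //; exact: trace_preimage.
Qed.

End FullTrace.

Lemma common_certainty_component_setT {R : realType} {X N : Type} {A : set (set X)}
    (t : N -> X -> set X -> R) :
  is_field A -> (forall i w, pba A (t i w)) -> [set: X] !=set0 ->
  common_certainty_component A t setT.
Proof.
move=> hA t_pba X0; split => //; exists setT; split; first exact: field_setT.
by split => // i w _; exact: (t_pba i w).2.2.
Qed.

Theorem proposition3 (R : realType) (Om N : Type) (A : set (set Om))
    (M : N -> set (set Om)) (t : N -> Om -> set Om -> R) :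
  type_space A M t ->
  (consistent A M t <->
   exists S : set Om, common_certainty_component A t S /\
     consistent (trace S A) (fun i => trace S (M i)) (induced_t S A t)).
Proof.
move=> [[i0] [hA [_ [_ [t_pba _]]]]]; split.
- move=> consT; exists setT; split.
    apply: common_certainty_component_setT => //.
    have [P PPi] := consT _ (finite_set1 i0).
    have [_ /conv_hull_nonempty[_ [w _ _]]] := weak_star_closure_nonempty (PPi i0 erefl).
    by exists w.
  move=> I fI; have [P PPi] := consT I fI; exists (pushforward to_setT P) => i Ii.
  exact: (Pi_pushforward_to_setT t i hA (t_pba i) _ (PPi i Ii)).
- move=> [S [[_ [E [AE [ES tE]]]] consS]] I fI; have [P' P'Pi] := consS I fI.
  exists (pushforward (@proj1_sig Om S) P') => i Ii.
  exact: (Pi_trace_pushforward S t i hA AE ES (t_pba i) (tE i) _ (P'Pi i Ii)).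
Qed.
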